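(* For every finite ultrametric space $(X,d)$ with $|X|\geqslant 2$ the following are equivalent: (i) $(X,d)\in\mathfrak U$; (ii) for every $r\in\operatorname{Sp}(X)$ the graph $G'_{r,X}$ is complete bipartite.
   Context: For a metric space $(X,d)$, $\operatorname{Sp}(X)=\{d(x,y): x,y\in X,\ x\neq y\}$. $\mathfrak U$ denotes the class of finite ultrametric spaces $X$ with $|\operatorname{Sp}(X)|=|X|-1$. For $r\in\operatorname{Sp}(X)$, $G_{r,X}$ is the graph with vertex set $X$ in which $\{u,v\}$ is an edge iff $d(u,v)=r$. For a nonempty graph $G=(V,E)$, $G'$ denotes the subgraph induced by $V$ minus the set of isolated vertices of $G$. A complete bipartite graph is a nonempty graph whose vertex set is partitioned into two disjoint sets such that no edge joins vertices of the same set and any two vertices from different sets are adjacent. *)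

From mathcomp Require Import all_boot all_order all_algebra.
Set Implicit Arguments. Unset Strict Implicit. Unset Printing Implicit Defensive.
Import Order.TTheory GRing.Theory Num.Theory.
Local Open Scope ring_scope.

Section Defs.
Variables (R : realFieldType) (T : finType).

Definition metric (d : T -> T -> R) : Prop :=
  [/\ forall x y, 0 <= d x y,
      forall x y, d x y = 0 <-> x = y,
      forall x y, d x y = d y x &
      forall x y z, d x z <= d x y + d y z].

Definition ultrametric (d : T -> T -> R) : Prop :=
  metric d /\ forall x y z, d x z <= Num.max (d x y) (d y z).

Definition Sp (d : T -> T -> R) : seq R :=
  undup [seq d p.1 p.2 | p <- enum [pred p : T * T | p.1 != p.2]].

Definition in_U (d : T -> T -> R) : Prop := size (Sp d) = (#|T| - 1)%N.

Definition G_adj (d : T -> T -> R) (r : R) : rel T :=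
  fun u v => (u != v) && (d u v == r).

(* vertex set of G' : the non-isolated vertices of a graph (T, e) *)
Definition nonisolated (e : rel T) : {set T} := [set v | [exists u, e v u]].

Definition complete_bipartite (V : {set T}) (e : rel T) : Prop :=
  V != set0 /\
  exists A B : {set T},
    [/\ A :&: B = set0, A :|: B = V, A != set0, B != set0 &
        {in V &, forall u v, e u v = ((u \in A) && (v \in B)) || ((u \in B) && (v \in A))}].

End Defs.

From mathcomp Require Import all_boot all_order all_algebra.
Import Order.TTheory GRing.Theory Num.Theory.
Set Implicit Arguments. Unset Strict Implicit. Unset Printing Implicit Defensive.
Local Open Scope ring_scope.

(* Order the points by an injective rank and say that x attaches at distance b
   when b is the distance from x to the set of earlier points (Prim's
   algorithm).  Every point but the first attaches at exactly one b in Sp(X),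
   and every b in Sp(X) is used: in a closed b-ball made of several open b-balls,
   the first point of an open b-ball missing the first point of the closed
   ball attaches at b.
   Hence |X| - 1 is the sum over Sp(X) of the positive numbers of points
   attaching at b, and X is in U iff each of them is 1.  Finally G'_{b,X} is
   complete bipartite iff exactly one point attaches at b: two such points,
   together with the earlier neighbour of the first, form a triangle inside one
   closed b-ball; a single such point w splits G'_{b,X} into the points of the
   open b-ball around w and the rest of the closed b-ball. *)

Section CompleteBipartite.
Variables (T : finType) (e : rel T).

Lemma complete_bipartiteP (V : {set T}) :
  complete_bipartite V e <->
  exists A : {set T},
    [/\ exists2 a, a \in V & a \in A, exists2 b, b \in V & b \notin A &
        {in V &, forall u v, e u v = ((u \in A) != (v \in A))}].
Proof.
split=> [[_ [A [B [AB0 ABV /set0Pn [a aA] /set0Pn [b bB] eAB]]]] |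
         [A [[a aV aA] [b bV bA] eA]]].
  have inB w : w \in V -> (w \in B) = (w \notin A).
    move=> wV; move/setP: AB0 => /(_ w); rewrite !inE.
    by move: wV; rewrite -ABV inE; case: (w \in A); case: (w \in B).
  have [aV bV] : a \in V /\ b \in V by rewrite -ABV !inE aA bB orbT.
  exists A; split; [by exists a | by exists b; rewrite -?inB | ].
  move=> u v uV vV; rewrite eAB // !inB //.
  by case: (u \in A); case: (v \in A).
split; first by apply/set0Pn; exists a.
exists (V :&: A), (V :\: A); split.
- by apply/setP=> w; rewrite !inE; case: (w \in A); rewrite ?andbF.
- exact: setID.
- by apply/set0Pn; exists a; rewrite inE aV.
- by apply/set0Pn; exists b; rewrite !inE bV bA.
move=> u v uV vV; rewrite eA // !inE uV vV.
by case: (u \in A); case: (v \in A).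
Qed.

Variable V : {set T}.
Hypothesis V_cbip : complete_bipartite V e.

Lemma complete_bipartite_triangle_free u v w :
  u \in V -> v \in V -> w \in V -> e u v -> e v w -> ~~ e u w.
Proof.
have [A [_ _ eA]] := (complete_bipartiteP V).1 V_cbip.
move=> uV vV wV; rewrite !eA //.
by case: (u \in A); case: (v \in A); case: (w \in A).
Qed.

Lemma complete_bipartite_path2 u v : u \in V -> v \in V ->
  e u v \/ exists w, e u w /\ e w v.
Proof.
have [A [[a aV aA] [b bV bA] eA]] := (complete_bipartiteP V).1 V_cbip.
move=> uV vV; rewrite eA //.
case: (boolP (u \in A)) => uA; case: (boolP (v \in A)) => vA; try by left.
- by right; exists b; rewrite !eA // uA vA (negbTE bA).
- by right; exists a; rewrite !eA // (negbTE uA) (negbTE vA) aA.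
Qed.

End CompleteBipartite.

Lemma sumn_eq_size (I : eqType) (s : seq I) (f : I -> nat) :
  {in s, forall i, 0 < f i}%N ->
  (\sum_(i <- s) f i = size s)%N <-> {in s, forall i, f i = 1%N}.
Proof.
move=> f_gt0; rewrite -sum1_size; split=> [sum_f i si | f1]; last first.
  by rewrite big_seq [RHS]big_seq; apply: eq_bigr => i /f1 ->.
have /eqP : (\sum_(j <- s | j \in s) (f j - 1) = 0)%N.
  rewrite sumnB; last by move=> j /f_gt0.
  by by rewrite -!big_seq sum_f subnn.
rewrite sum_nat_seq_eq0 => /allP /(_ i si) /implyP /(_ si).
by rewrite subn_eq0 => f_le1; apply/eqP; rewrite eqn_leq f_le1 f_gt0.
Qed.

Section Ultrametric.
Variables (R : realFieldType) (T : finType) (d : T -> T -> R).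
Hypothesis d_ultra : ultrametric d.

Lemma dxx x : d x x = 0.
Proof. by case: d_ultra => -[_ d0 _ _] _; apply/d0. Qed.

Lemma dC x y : d x y = d y x.
Proof. by case: d_ultra => -[_ _ dsym _] _. Qed.

Lemma d_gt0 x y : x != y -> 0 < d x y.
Proof.
case: d_ultra => -[d_ge0 d0 _ _] _ xy.
by rewrite lt_def d_ge0 andbT; apply: contra xy => /eqP /d0 ->.
Qed.

Lemma d_le_max x y z : d x z <= Num.max (d x y) (d y z).
Proof. by case: d_ultra. Qed.

Lemma d_le_trans b x y z : d x y <= b -> d y z <= b -> d x z <= b.
Proof. by move=> xy yz; apply: le_trans (d_le_max x y z) _; rewrite ge_max xy. Qed.

Lemma d_lt_trans b x y z : d x y < b -> d y z < b -> d x z < b.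
Proof. by move=> xy yz; apply: le_lt_trans (d_le_max x y z) _; rewrite gt_max xy. Qed.

Lemma d_isosceles x y z : d x y < d y z -> d x z = d y z.
Proof.
move=> lt_xy_yz; apply/eqP; rewrite eq_le.
rewrite (le_trans (d_le_max x y z)) ?ge_max ?(ltW lt_xy_yz) //=.
rewrite leNgt; apply/negP => lt_xz_yz.
rewrite [d x y]dC in lt_xy_yz.
by have := d_lt_trans lt_xy_yz lt_xz_yz; rewrite ltxx.
Qed.

Lemma SpP b : reflect (exists x, exists2 y, x != y & d x y = b) (b \in Sp d).
Proof.
rewrite /Sp mem_undup; apply: (iffP mapP) => [[[x y]] | [x [y xy <-]]].
  by rewrite mem_enum inE /= => xy ->; exists x, y.
by exists (x, y); rewrite ?mem_enum ?inE.
Qed.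

Lemma Sp_gt0 b : b \in Sp d -> 0 < b.
Proof. by case/SpP => x [y xy <-]; apply: d_gt0. Qed.

Lemma G_adjE b u v : 0 < b -> G_adj d b u v = (d u v == b).
Proof.
move=> b_gt0; rewrite /G_adj; case: eqVneq => [-> | //].
by rewrite dxx eq_sym gt_eqF.
Qed.

Lemma G_adjC b u v : G_adj d b u v = G_adj d b v u.
Proof. by rewrite /G_adj eq_sym dC. Qed.

Lemma nonisolated_G_adj b u v : G_adj d b u v ->
  u \in nonisolated (G_adj d b) /\ v \in nonisolated (G_adj d b).
Proof.
move=> uv; rewrite !inE; split; apply/existsP; first by exists v.
by exists u; rewrite G_adjC.
Qed.

Lemma complete_bipartite_G_adj_le b u v :
  complete_bipartite (nonisolated (G_adj d b)) (G_adj d b) ->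
  u \in nonisolated (G_adj d b) -> v \in nonisolated (G_adj d b) -> d u v <= b.
Proof.
move=> cbip uV vV.
have [/andP [_ /eqP ->] // | [w [/andP [_ /eqP uw] /andP [_ /eqP wv]]]] :=
  complete_bipartite_path2 cbip uV vV.
by apply: (@d_le_trans _ _ w); rewrite ?uw ?wv.
Qed.

Section Attached.
Variable rk : T -> nat.
Hypothesis rk_inj : injective rk.

Definition attached b : {set T} :=
  [set x | [exists y, (rk y < rk x)%N && (d x y == b)] &&
           [forall y, (rk y < rk x)%N ==> (b <= d x y)]].

Lemma attachedP b x :
  reflect ((exists2 y, (rk y < rk x)%N & d x y = b) /\
           forall y, (rk y < rk x)%N -> b <= d x y)
          (x \in attached b).
Proof.
rewrite inE; apply: (iffP andP) => [[] | [[y lt xy] min]].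
  move=> /existsP [y /andP [lt /eqP xy]] /forallP min.
  by split; [exists y | move=> z; apply/implyP].
split; first by apply/existsP; exists y; rewrite lt xy eqxx.
by apply/forallP => z; apply/implyP/min.
Qed.

Lemma attached_uniq b1 b2 x : x \in attached b1 -> x \in attached b2 -> b1 = b2.
Proof.
move=> /attachedP [[y1 lt1 <-] min1] /attachedP [[y2 lt2 <-] min2].
by apply/eqP; rewrite eq_le min1 // min2.
Qed.

Lemma attached_exists x y : (rk y < rk x)%N -> exists2 b, b \in Sp d & x \in attached b.
Proof.
move=> lt_yx; case: (arg_minP (d x) (lt_yx : [pred z | rk z < rk x]%N y)) => z lt_zx min.
exists (d x z).
  by apply/SpP; exists x, z => //; apply: contraTneq lt_zx => ->; rewrite /= ltnn.
by apply/attachedP; split; [exists z | ].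
Qed.

Lemma count_attached x :
  count (fun b => x \in attached b) (Sp d) = [exists y, rk y < rk x]%N.
Proof.
case: existsP => [[y /attached_exists [b Sp_b xb]] | none].
  rewrite (@eq_in_count _ _ (pred1 b)) ?count_uniq_mem ?undup_uniq ?Sp_b //.
  by move=> c _ /=; apply/idP/eqP => [/attached_uniq/(_ xb) | ->].
apply/eqP; rewrite -leqn0 leqNgt -has_count; apply/hasP => -[b _].
by case/attachedP => -[y lt _] _; apply: none; exists y.
Qed.

Lemma sum_card_attached :
  (\sum_(b <- Sp d) #|attached b| = #|[set x | [exists y, rk y < rk x]%N]|)%N.
Proof.
have cardE (A : {set T}) : #|A| = (\sum_x (x \in A))%N.
  by rewrite -sum1_card big_mkcond.
rewrite cardE; under eq_bigr do rewrite cardE.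
rewrite exchange_big; apply: eq_bigr => x _.
rewrite inE -count_attached -sum1_count [RHS]big_mkcond.
by apply: (@eq_bigr nat 0%N addn) => b _; case: (_ \in _).
Qed.

Lemma card_has_predecessor : #|[set x | [exists y, rk y < rk x]%N]| = #|T|.-1.
Proof.
have [T0 | /card_gt0P [x0 _]] := posnP #|T|.
  by apply/eqP; rewrite T0 -leqn0 -T0 max_card.
case: (arg_minnP rk (isT : predT x0)) => m _ m_min.
rewrite -(cardsC1 m); apply: eq_card => x; rewrite !inE.
apply/existsP/idP => [[y lt_yx] | xm].
  by apply: contraTneq lt_yx => ->; rewrite -leqNgt m_min.
by exists m; rewrite ltn_neqAle m_min // andbT; apply: contra_neq xm => /rk_inj.
Qed.

Lemma attached_in_ball b u w m :
  0 < b -> d u w <= b -> d u m <= b -> b <= d m w ->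
  (forall z, d u z <= b -> (rk m <= rk z)%N) ->
  exists2 x, x \in attached b & d w x < b.
Proof.
move=> b_gt0 uw um mw m_min.
have ww : d w w < b by rewrite dxx.
case: (arg_minnP rk (ww : [pred z | d w z < b] w)) => x /= wx x_min.
have mw_b : d m w = b by apply/eqP; rewrite eq_le mw andbT dC (d_le_trans _ um) // dC.
have wm_b : d w m = b by rewrite dC.
have xm_b : d x m = b by rewrite (@d_isosceles x w m) // wm_b dC.
exists x => //; apply/attachedP; split.
  exists m => //; rewrite ltn_neqAle m_min ?(d_le_trans uw) ?(ltW wx) // andbT.
  by apply: contraTneq wx => /rk_inj <-; rewrite -leNgt dC.
move=> y lt_yx; rewrite leNgt; apply: contraTN lt_yx => xy.
by rewrite -leqNgt x_min //= (d_lt_trans wx).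
Qed.

Lemma attached_near_edge u v : u != v ->
  exists2 x, x \in attached (d u v) & (d u x < d u v) || (d v x < d u v).
Proof.
move=> uv; set b := d u v; have b_gt0 : 0 < b := d_gt0 uv.
have uu : d u u <= b by rewrite dxx ltW.
case: (arg_minnP rk (uu : [pred z | d u z <= b] u)) => m /= um m_min.
have [mu | mv] : b <= d m u \/ b <= d m v.
  case: (leP b (d m u)) => mu; [by left | right].
  rewrite leNgt; apply/negP => mv.
  rewrite dC in mu; by have := d_lt_trans mu mv; rewrite ltxx.
- have [x xb ux] := attached_in_ball b_gt0 uu um mu m_min.
  by exists x; rewrite ?ux.
- have [x xb vx] := attached_in_ball b_gt0 (lexx b) um mv m_min.
  by exists x; rewrite ?vx ?orbT.
Qed.

Lemma attached_neq0 b : b \in Sp d -> (0 < #|attached b|)%N.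
Proof.
case/SpP => u [v uv <-]; have [x xb _] := attached_near_edge uv.
by apply/card_gt0P; exists x.
Qed.

Lemma attached_nonisolated b x : 0 < b -> x \in attached b ->
  exists2 z, (rk z < rk x)%N & G_adj d b x z.
Proof.
by move=> b_gt0 /attachedP [[z lt_zx xz] _]; exists z; rewrite ?G_adjE ?xz.
Qed.

Lemma card_attached_le1 b : 0 < b ->
  complete_bipartite (nonisolated (G_adj d b)) (G_adj d b) -> (#|attached b| <= 1)%N.
Proof.
move=> b_gt0 cbip; apply/card_le1_eqP => w1 w2.
wlog lt12 : w1 w2 / (rk w1 < rk w2)%N => [wlog h1 h2 | w1b w2b].
  case: (ltngtP (rk w1) (rk w2)) => [lt12 | lt21 | /rk_inj //].
  - exact: wlog.
  - by apply/esym/wlog.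
have [z1 lt_z1 e1] := attached_nonisolated b_gt0 w1b.
have [_ _ /nonisolated_G_adj [w2V _]] := attached_nonisolated b_gt0 w2b.
have [w1V z1V] := nonisolated_G_adj e1.
have /attachedP [_ min2] := w2b.
move: e1; rewrite G_adjE // => /eqP w1z1.
have w1w2 : d w1 w2 = b.
  apply/eqP; rewrite eq_le complete_bipartite_G_adj_le //.
  by rewrite dC min2.
have w2z1 : d w2 z1 = b.
  apply/eqP; rewrite eq_le min2 ?(ltn_trans lt_z1) // andbT.
  by apply: (@d_le_trans _ _ w1); rewrite ?w1z1 // dC w1w2.
have := complete_bipartite_triangle_free cbip w1V w2V z1V.
by rewrite !G_adjE // w1w2 w2z1 w1z1 eqxx => /(_ isT isT).
Qed.

Lemma complete_bipartite_attached1 b w : 0 < b -> attached b = [set w] ->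
  complete_bipartite (nonisolated (G_adj d b)) (G_adj d b).
Proof.
move=> b_gt0 attached_w.
have near_w u v : G_adj d b u v -> (d u w < b) || (d v w < b).
  rewrite G_adjE // => /eqP uv_b; have uv : u != v.
    by apply/eqP => eq_uv; move: b_gt0; rewrite -uv_b eq_uv dxx ltxx.
  by have [x] := attached_near_edge uv; rewrite uv_b attached_w inE => /eqP ->.
have V_w u : u \in nonisolated (G_adj d b) -> d u w <= b.
  rewrite inE => /existsP [v uv]; have := near_w u v uv; rewrite G_adjE // in uv.
  case/orP => [/ltW // | vw]; apply: (@d_le_trans _ _ v); [by rewrite (eqP uv) | exact: ltW].
have [z lt_zw wz] : exists2 z, (rk z < rk w)%N & G_adj d b w z.
  by apply: attached_nonisolated; rewrite ?attached_w ?inE.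
have [wV zV] := nonisolated_G_adj wz.
apply/(complete_bipartiteP (G_adj d b)); exists [set u | d u w < b]; split.
- by exists w; rewrite // inE dxx.
- by exists z; rewrite // inE -leNgt dC; move: wz; rewrite G_adjE // => /eqP ->.
move=> u v uV vV; rewrite !inE G_adjE //.
have [uw_le vw_le] := (V_w u uV, V_w v vV).
case: (ltP (d u w) b) => uw; case: (ltP (d v w) b) => vw /=.
- by rewrite lt_eqF // (d_lt_trans uw) // dC.
- have wv_b : d w v = b by apply/eqP; rewrite dC eq_le vw_le.
  by rewrite (@d_isosceles u w v) wv_b ?eqxx.
- have wu_b : d w u = b by apply/eqP; rewrite dC eq_le uw_le.
  by rewrite dC (@d_isosceles v w u) wu_b ?eqxx.
- apply/negbTE/negP => uv; have := near_w u v.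
  by rewrite G_adjE // uv ltNge uw ltNge vw => /(_ isT).
Qed.

Lemma complete_bipartite_G_adj_card1 b : b \in Sp d ->
  complete_bipartite (nonisolated (G_adj d b)) (G_adj d b) <-> #|attached b| = 1%N.
Proof.
move=> Sp_b; have b_gt0 := Sp_gt0 Sp_b.
split=> [cbip | /eqP /cards1P [w]]; last exact: complete_bipartite_attached1.
by apply/eqP; rewrite eqn_leq attached_neq0 // card_attached_le1.
Qed.

End Attached.
End Ultrametric.

Theorem theorem8 (R : realFieldType) (T : finType) (d : T -> T -> R) :
  ultrametric d -> (2 <= #|T|)%N ->
  (in_U d <->
   forall r, r \in Sp d ->
     complete_bipartite (nonisolated (G_adj d r)) (G_adj d r)).
Proof.
move=> d_ultra _.
pose rk (x : T) : nat := enum_rank x.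
have rk_inj : injective rk by move=> x y /val_inj /enum_rank_inj.
have attached_gt0 : {in Sp d, forall b, 0 < #|attached d rk b|}%N.
  by move=> b; apply: (attached_neq0 d_ultra rk_inj).
rewrite /in_U subn1 -(card_has_predecessor rk_inj) -(sum_card_attached d rk).
split=> [/esym /(sumn_eq_size attached_gt0) card1 b Sp_b | cbip].
  exact/(complete_bipartite_G_adj_card1 d_ultra rk_inj Sp_b)/card1.
apply/esym/(sumn_eq_size attached_gt0) => b Sp_b.
exact/(complete_bipartite_G_adj_card1 d_ultra rk_inj Sp_b)/cbip.
Qed.
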